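(* Let $n\ge1$, let $\Gamma$ be a set of formulas and $\alpha$ a formula, and suppose there are distinct propositional variables $p_1,\dots,p_n$ not occurring in $\Gamma\cup\{\alpha\}$. If $\Gamma\nvdash_n\alpha$, then $\Gamma\nvDash_n\alpha$.
   Context: Formulas are built from a countably infinite set of propositional variables and $\bot$ using $\land,\lor,\to$; $\neg\alpha:=\alpha\to\bot$; intuitionistic Kripke semantics with valuations assigning upward-closed sets. $\mathfrak{F}_n=\langle\wp^*(n),\supseteq\rangle$, where $n=\{0,\dots,n-1\}$ and $\wp^*(n)$ is the set of non-empty subsets of $n$; its root is $n$. $\Gamma\vDash_n\varphi$ means: for every valuation $V$ on $\mathfrak{F}_n$, if $\mathfrak{F}_n,V,n\vDash\gamma$ for all $\gamma\in\Gamma$ then $\mathfrak{F}_n,V,n\vDash\varphi$. $\mathbf{ML}_n$ is the smallest superintuitionistic logic (containing intuitionistic propositional logic, closed under modus ponens and uniform substitution) that contains all instances of $\boldsymbol{kp}$: $(\neg p\to q\lor r)\to(\neg p\to q)\lor(\neg p\to r)$ and $\boldsymbol{bd}_n$: $p_n\lor(p_n\to(p_{n-1}\lor(p_{n-1}\to(\cdots(p_1\lor(p_1\to\bot))\cdots))))$, and is closed under the rule $\boldsymbol{Ed}_n$: from $\alpha\to(\beta\lor\bigvee_{i=1}^n\neg\lambda_i)$ infer $\alpha\to\beta$, where $p_1,\dots,p_n$ are distinct variables not occurring in $\alpha$ or $\beta$ and $\lambda_i=p_i\land\bigwedge_{j\neq i}\neg p_j$. $\Gamma\vdash_n\varphi$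 means there are finitely many $\gamma_1,\dots,\gamma_k\in\Gamma$ with $\bigwedge_i\gamma_i\to\varphi\in\mathbf{ML}_n$. *)

From mathcomp Require Import all_boot.
Set Implicit Arguments. Unset Strict Implicit. Unset Printing Implicit Defensive.

Inductive form : Type :=
| Var : nat -> form
| Bot : form
| And : form -> form -> form
| Or  : form -> form -> form
| Imp : form -> form -> form.

Definition Neg (a : form) : form := Imp a Bot.
Definition Top : form := Imp Bot Bot.

Fixpoint vars (f : form) : seq nat :=
  match f with
  | Var p => [:: p]
  | Bot => [::]
  | And a b | Or a b | Imp a b => vars a ++ vars b
  end.

Fixpoint subst (s : nat -> form) (f : form) : form :=
  match f with
  | Var p => s p
  | Bot => Bot
  | And a b => And (subst s a) (subst s b)
  | Or a b => Or (subst s a) (subst s b)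
  | Imp a b => Imp (subst s a) (subst s b)
  end.

Fixpoint bigAnd (l : seq form) : form :=
  match l with [::] => Top | a :: l' => And a (bigAnd l') end.
Fixpoint bigOr (l : seq form) : form :=
  match l with [::] => Bot | a :: l' => Or a (bigOr l') end.

(* Worlds are sets w : {set 'I_n} with w != set0; v is above w iff v ⊆ w. *)
Definition persistent (n : nat) (V : nat -> {set 'I_n} -> Prop) : Prop :=
  forall p (w v : {set 'I_n}), w != set0 -> v != set0 -> v \subset w ->
    V p w -> V p v.

Fixpoint sat (n : nat) (V : nat -> {set 'I_n} -> Prop) (w : {set 'I_n})
  (f : form) : Prop :=
  match f with
  | Var p => V p w
  | Bot => False
  | And a b => sat V w a /\ sat V w b
  | Or a b => sat V w a \/ sat V w b
  | Imp a b => forall v : {set 'I_n}, v != set0 -> v \subset w ->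
                 sat V v a -> sat V v b
  end.

(* Gamma |=_n phi : truth at the root n = [set: 'I_n] is preserved. *)
Definition sem_cons (n : nat) (Gamma : form -> Prop) (phi : form) : Prop :=
  forall V : nat -> {set 'I_n} -> Prop, persistent V ->
    (forall g, Gamma g -> sat V [set: 'I_n] g) -> sat V [set: 'I_n] phi.

Definition kp (p q r : form) : form :=
  Imp (Imp (Neg p) (Or q r)) (Or (Imp (Neg p) q) (Imp (Neg p) r)).

Fixpoint bd (f : nat -> form) (k : nat) : form :=
  match k with
  | 0 => Bot
  | k'.+1 => Or (f k'.+1) (Imp (f k'.+1) (bd f k'))
  end.

Definition lam (ps : seq nat) (x : nat) : form :=
  And (Var x) (bigAnd [seq Neg (Var y) | y <- ps & y != x]).

Inductive ML (n : nat) : form -> Prop :=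
| ax1 a b : ML n (Imp a (Imp b a))
| ax2 a b c : ML n (Imp (Imp a (Imp b c)) (Imp (Imp a b) (Imp a c)))
| ax3 a b : ML n (Imp (And a b) a)
| ax4 a b : ML n (Imp (And a b) b)
| ax5 a b : ML n (Imp a (Imp b (And a b)))
| ax6 a b : ML n (Imp a (Or a b))
| ax7 a b : ML n (Imp b (Or a b))
| ax8 a b c : ML n (Imp (Imp a c) (Imp (Imp b c) (Imp (Or a b) c)))
| ax9 a : ML n (Imp Bot a)
| axkp p q r : ML n (kp p q r)
| axbd f : ML n (bd f n)
| mp a b : ML n (Imp a b) -> ML n a -> ML n b
| usubst s a : ML n a -> ML n (subst s a)
| ed (ps : seq nat) a b : size ps = n -> uniq ps ->
    (forall x, x \in ps -> x \notin vars a /\ x \notin vars b) ->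
    ML n (Imp a (Or b (bigOr [seq Neg (lam ps x) | x <- ps]))) ->
    ML n (Imp a b).

(* list membership (form has no eqType instance here) *)
Fixpoint inl (g : form) (l : seq form) : Prop :=
  match l with [::] => False | a :: l' => a = g \/ inl g l' end.

Definition derives (n : nat) (Gamma : form -> Prop) (phi : form) : Prop :=
  exists gs : seq form, (forall g, inl g gs -> Gamma g) /\ ML n (Imp (bigAnd gs) phi).

(* If [Gamma] does not derive [alpha], the rule [Ed_n] lets Lindenbaum's lemma
   extend [Gamma] to a prime theory [T1] omitting [alpha] and every [Neg lambda_i], so that
   each [lambda_i] lies in some prime extension of [T1].  The support of a prime theory [x] is
   the set of [i] such that some prime extension of [x] contains [lambda_i], plus an extra
   index [n] when some extension of [x] can never reach any [lambda_i].  The Kreisel-Putnam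
   axiom turns unions of supports into meets of theories, and [bd_n] bounds proper chains of
   prime theories by [n]; together they show that the prime extensions of [T1] are
   determined by their supports, which are exactly the nonempty subsets of [n].  So the
   prime extensions of [T1] form a copy of [F_n] rooted at [T1], and the truth lemma in this
   model refutes [Gamma |=_n alpha]. *)

From HB Require Import structures.
From mathcomp Require Import all_boot zify.
From Stdlib Require Import Classical ClassicalEpsilon IndefiniteDescription.
Set Implicit Arguments. Unset Strict Implicit. Unset Printing Implicit Defensive.

Lemma inl_cat (g : form) l1 l2 : inl g (l1 ++ l2) <-> inl g l1 \/ inl g l2.
Proof. by elim: l1 => [|a l1 IH] /=; [tauto | rewrite IH; tauto]. Qed.

Lemma inl_map (f : nat -> form) (l : seq nat) x : x \in l -> inl (f x) (map f l).
Proof. by elim: l => [|a l IH] //; rewrite inE => /orP [/eqP ->|/IH]; [left|right]. Qed.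

Lemma inl_filter_map (f : nat -> form) (P : pred nat) (l : seq nat) x :
  x \in l -> P x -> inl (f x) [seq f y | y <- l & P y].
Proof.
elim: l => [|a l IH] //; rewrite inE => /orP [/eqP <-|Hx] Px /=; first by rewrite Px; left.
by case: (P a) => /=; [right|]; apply: IH.
Qed.

Lemma inl_partition (P Q : form -> Prop) ts : (forall t, inl t ts -> P t \/ Q t) ->
  exists ps qs, [/\ forall t, inl t ps -> P t, forall t, inl t qs -> Q t &
    forall t, inl t ts -> inl t ps \/ inl t qs].
Proof.
elim: ts => [|t ts IH] Hts; first by exists [::], [::].
have [ps [qs [HP HQ Hpq]]] := IH (fun g Hg => Hts g (or_intror Hg)).
case: (Hts t (or_introl erefl)) => Ht.
- exists (t :: ps), qs; split=> // [g [<-|/HP] //|g [<-|/Hpq []]];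
    by [left; left|left; right|right].
- exists ps, (t :: qs); split=> // [g [<-|/HQ] //|g [<-|/Hpq []]];
    by [right; left|left|right; right].
Qed.

Definition th_sub (A B : form -> Prop) : Prop := forall g, A g -> B g.

Lemma th_sub_trans (A B C : form -> Prop) : th_sub A B -> th_sub B C -> th_sub A C.
Proof. by move=> AB BC g /AB /BC. Qed.

Section Provability.
Variable n : nat.

Inductive provable (ctx : seq form) : form -> Prop :=
| prv_ax a : ML n a -> provable ctx a
| prv_hyp a : inl a ctx -> provable ctx a
| prv_mp a b : provable ctx (Imp a b) -> provable ctx a -> provable ctx b.

Lemma prv_head a ctx : provable (a :: ctx) a.
Proof. by apply: prv_hyp; left. Qed.
Arguments prv_head {a ctx}.

Lemma prv_second a b ctx : provable (a :: b :: ctx) b.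
Proof. by apply: prv_hyp; right; left. Qed.
Arguments prv_second {a b ctx}.

Lemma prv_refl ctx a : provable ctx (Imp a a).
Proof.
apply: (prv_mp (a := Imp a (Imp a a))); last exact/prv_ax/ax1.
by apply: (prv_mp (a := Imp a (Imp (Imp a a) a))); apply/prv_ax; [apply: ax2|apply: ax1].
Qed.

Lemma prv_deduction ctx a b : provable (a :: ctx) b -> provable ctx (Imp a b).
Proof.
have weak c : provable ctx c -> provable ctx (Imp a c).
  by apply: prv_mp; exact/prv_ax/ax1.
elim=> {b} [b Hb|b [->|Hb]|c b _ IH1 _ IH2].
- exact/weak/prv_ax.
- exact: prv_refl.
- exact/weak/prv_hyp.
by apply: prv_mp IH2; apply: prv_mp IH1; exact/prv_ax/ax2.
Qed.

Lemma prv_cut c1 c2 a : (forall g, inl g c1 -> provable c2 g) ->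
  provable c1 a -> provable c2 a.
Proof.
move=> H; elim=> {a} [a Ha|a /H //|a b _ IH1 _ IH2]; [exact: prv_ax | exact: prv_mp IH1 IH2].
Qed.

Lemma prv_weaken c1 c2 a : (forall g, inl g c1 -> inl g c2) ->
  provable c1 a -> provable c2 a.
Proof. by move=> H; apply: prv_cut => g /H; apply: prv_hyp. Qed.

Lemma prv_imp ctx a b : provable [:: a] b -> provable ctx (Imp a b).
Proof. by move/prv_deduction; apply: prv_weaken. Qed.

Lemma prv_ML gs a : provable gs a -> ML n (Imp (bigAnd gs) a).
Proof.
suff prv_nil b : provable [::] b -> ML n b.
  move=> H; apply/prv_nil/prv_deduction; apply: prv_cut H => g.
  elim: gs => [|h gs IH] //= [<-|/IH Hg].
    by apply: prv_mp prv_head; apply/prv_ax/ax3.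
  by apply: prv_cut Hg => _ [<-|[]]; apply: prv_mp prv_head; apply/prv_ax/ax4.
by elim=> {b} [b //|b []|c b _ IH1 _ IH2]; exact: mp IH1 IH2.
Qed.

Lemma prv_andI ctx a b : provable ctx a -> provable ctx b -> provable ctx (And a b).
Proof. move=> Ha; apply: prv_mp; apply: prv_mp Ha; exact/prv_ax/ax5. Qed.
Lemma prv_andL ctx a b : provable ctx (And a b) -> provable ctx a.
Proof. apply: prv_mp; exact/prv_ax/ax3. Qed.
Lemma prv_andR ctx a b : provable ctx (And a b) -> provable ctx b.
Proof. apply: prv_mp; exact/prv_ax/ax4. Qed.
Lemma prv_orL ctx a b : provable ctx a -> provable ctx (Or a b).
Proof. apply: prv_mp; exact/prv_ax/ax6. Qed.
Lemma prv_orR ctx a b : provable ctx b -> provable ctx (Or a b).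
Proof. apply: prv_mp; exact/prv_ax/ax7. Qed.
Lemma prv_orE ctx a b c :
  provable ctx (Imp a c) -> provable ctx (Imp b c) -> provable ctx (Or a b) -> provable ctx c.
Proof. move=> H1 H2; apply: prv_mp; apply: prv_mp H2; apply: prv_mp H1; exact/prv_ax/ax8. Qed.
Lemma prv_botE ctx a : provable ctx Bot -> provable ctx a.
Proof. apply: prv_mp; exact/prv_ax/ax9. Qed.

Lemma prv_bigAnd gs : provable gs (bigAnd gs).
Proof.
elim: gs => [|g gs IH] /=; first exact: prv_refl.
by apply: prv_andI prv_head _; apply: prv_weaken IH => x; right.
Qed.

Lemma prv_bigAnd_mem gs g : inl g gs -> provable [:: bigAnd gs] g.
Proof.
elim: gs => [|a gs IH] //= [->|/IH Hg]; first exact/prv_andL/prv_head.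
by apply: prv_cut Hg => _ [<-|[]]; exact/prv_andR/prv_head.
Qed.

Lemma prv_bigOr_sub ts ts' : (forall t, inl t ts -> inl t ts') ->
  provable [:: bigOr ts] (bigOr ts').
Proof.
have prv_bigOr_mem t us : inl t us -> provable [:: t] (bigOr us).
  by elim: us => [|u us IH] //= [->|/IH]; [apply/prv_orL/prv_head | apply: prv_orR].
elim: ts => [|t ts IH] Hts /=; first exact/prv_botE/prv_head.
apply: prv_orE prv_head; apply: prv_imp.
  by apply: prv_bigOr_mem; apply: Hts; left.
by apply: IH => u Hu; apply: Hts; right.
Qed.

Lemma prv_bigOr_split ts ps qs : (forall t, inl t ts -> inl t ps \/ inl t qs) ->
  provable [:: bigOr ts] (Or (bigOr ps) (bigOr qs)).
Proof.
move=> H; apply: (prv_cut (c1 := [:: bigOr (ps ++ qs)])).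
  move=> _ [<-|[]]; apply: prv_bigOr_sub => t /H; exact: (proj2 (inl_cat _ _ _)).
elim: ps {H} => [|p ps IH] /=; first exact/prv_orR/prv_head.
apply: prv_orE prv_head; apply: prv_imp; first exact/prv_orL/prv_orL/prv_head.
apply: prv_orE IH; apply: prv_imp; [exact/prv_orL/prv_orR/prv_head | exact/prv_orR/prv_head].
Qed.

End Provability.

Arguments prv_head {n a ctx}.
Arguments prv_second {n a b ctx}.
Arguments prv_bigAnd {n gs}.
Arguments prv_bigAnd_mem {n gs g}.
Arguments prv_bigOr_sub {n ts ts'}.
Arguments prv_bigOr_split {n ts ps qs}.

Section Derivability.
Variable n : nat.

Definition derivable (X : form -> Prop) (a : form) : Prop :=
  exists gs, (forall g, inl g gs -> X g) /\ provable n gs a.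

Lemma derivable_hyp (X : form -> Prop) a : X a -> derivable X a.
Proof. by move=> Ha; exists [:: a]; split; [move=> g [<-|[]] | apply: prv_head]. Qed.

Lemma derivable_mono (X Y : form -> Prop) a : th_sub X Y -> derivable X a -> derivable Y a.
Proof. by move=> XY [gs [Hgs Ha]]; exists gs; split=> // g /Hgs /XY. Qed.

Lemma derivable_mp X a b : derivable X (Imp a b) -> derivable X a -> derivable X b.
Proof.
case=> [ks [Hks Hab]] [ls [Hls Ha]]; exists (ks ++ ls); split.
  by move=> g /inl_cat [/Hks|/Hls].
by apply: prv_mp; [apply: prv_weaken Hab | apply: prv_weaken Ha] => g Hg;
  apply/inl_cat; [left|right].
Qed.

Lemma derivable_cut X gs a :
  (forall g, inl g gs -> derivable X g) -> provable n gs a -> derivable X a.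
Proof.
elim: gs a => [|g gs IH] a Hgs Ha; first by exists [::].
apply: derivable_mp (Hgs g (or_introl erefl)).
by apply: IH (prv_deduction Ha) => h Hh; apply: Hgs; right.
Qed.

Lemma derivable_prv1 X a b : provable n [:: a] b -> derivable X a -> derivable X b.
Proof. by move=> Hab Ha; apply: derivable_cut Hab => g [<-|[]]. Qed.

Lemma derivable_split (X Y : form -> Prop) a : derivable (fun g => X g \/ Y g) a ->
  exists ys, (forall g, inl g ys -> Y g) /\ derivable X (Imp (bigAnd ys) a).
Proof.
case=> gs [Hgs Ha]; have [xs [ys [Hxs Hys Hxys]]] := inl_partition Hgs.
exists ys; split=> //; exists xs; split=> //; apply: prv_deduction; apply: prv_cut Ha.
move=> g /Hxys [Hg|Hg]; first by apply: prv_hyp; right.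
by apply: prv_cut (prv_bigAnd_mem Hg) => _ [<-|[]]; apply: prv_head.
Qed.

Lemma derivable_deduction X a b :
  derivable (fun g => X g \/ g = a) b -> derivable X (Imp a b).
Proof.
case/derivable_split=> ys [Hys Hb]; apply: derivable_prv1 Hb.
have Hys' : provable n [:: a] (bigAnd ys).
  elim: ys Hys => [|y ys IH] Hys /=; first exact: prv_refl.
  apply: prv_andI; first by rewrite (Hys y (or_introl erefl)); apply: prv_head.
  by apply: IH => g Hg; apply: Hys; right.
apply: prv_deduction; apply: (prv_mp (a := bigAnd ys)); first exact: prv_second.
by apply: prv_cut Hys' => _ [<-|[]]; apply: prv_head.
Qed.

Definition prime_theory (T : form -> Prop) : Prop :=
  [/\ forall a, derivable T a -> T a, ~ T Bot & forall a b, T (Or a b) -> T a \/ T b].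

Section PrimeTheory.
Variable T : form -> Prop.
Hypothesis primeT : prime_theory T.

Lemma prime_prv gs a : (forall g, inl g gs -> T g) -> provable n gs a -> T a.
Proof. by case: primeT => Tclosed _ _ Hgs Ha; apply: Tclosed; exists gs. Qed.

Lemma prime_prv1 a b : provable n [:: a] b -> T a -> T b.
Proof. by move=> Hab Ha; apply: prime_prv Hab => g [<-|[]]. Qed.

Lemma prime_prv2 a b c : provable n [:: a; b] c -> T a -> T b -> T c.
Proof. by move=> Habc Ha Hb; apply: prime_prv Habc => g [<-|[<-|[]]]. Qed.

Lemma prime_mp a b : T (Imp a b) -> T a -> T b.
Proof. by apply: prime_prv2; apply: (prv_mp prv_head prv_second). Qed.

Lemma prime_ML a : ML n a -> T a.
Proof. by move=> Ha; apply: (prime_prv (gs := [::])) => //; apply: prv_ax. Qed.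

Lemma prime_bigOr ts : (forall t, inl t ts -> ~ T t) -> ~ T (bigOr ts).
Proof.
case: primeT => _ Tbot Tor; elim: ts => [|t ts IH] Hts //= /Tor [].
  by apply: Hts; left.
by apply: IH => g Hg; apply: Hts; right.
Qed.

End PrimeTheory.

End Derivability.

Arguments derivable_hyp {n X a}.

Fixpoint tree_of_form (f : form) : GenTree.tree nat :=
  match f with
  | Var p => GenTree.Leaf p
  | Bot => GenTree.Node 0 [::]
  | And a b => GenTree.Node 1 [:: tree_of_form a; tree_of_form b]
  | Or a b => GenTree.Node 2 [:: tree_of_form a; tree_of_form b]
  | Imp a b => GenTree.Node 3 [:: tree_of_form a; tree_of_form b]
  end.

Fixpoint form_of_tree (t : GenTree.tree nat) : form :=
  match t with
  | GenTree.Leaf p => Var p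
  | GenTree.Node 1 [:: a; b] => And (form_of_tree a) (form_of_tree b)
  | GenTree.Node 2 [:: a; b] => Or (form_of_tree a) (form_of_tree b)
  | GenTree.Node 3 [:: a; b] => Imp (form_of_tree a) (form_of_tree b)
  | _ => Bot
  end.

Lemma tree_of_formK : cancel tree_of_form form_of_tree.
Proof. by elim=> //= [a -> b ->|a -> b ->|a -> b ->]. Qed.

HB.instance Definition _ := Countable.copy form (can_type tree_of_formK).

Definition enum_form (k : nat) : form := odflt Bot (unpickle k).

Lemma enum_form_surj f : exists k, enum_form k = f.
Proof. by exists (pickle f); rewrite /enum_form pickleK. Qed.

Section Lindenbaum.
Variable n : nat.
Variable Theta : form -> Prop.

Definition avoids (X : form -> Prop) : Prop :=
  forall ts, (forall t, inl t ts -> Theta t) -> ~ derivable n X (bigOr ts).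

Variable Delta : form -> Prop.
Hypothesis Delta_avoids : avoids Delta.

Definition add_form (X : form -> Prop) (a : form) (g : form) : Prop := X g \/ g = a.

Fixpoint lind_stage (k : nat) : form -> Prop :=
  if k is k'.+1 then
    let X := lind_stage k' in
    if excluded_middle_informative (avoids (add_form X (enum_form k')))
    then add_form X (enum_form k') else X
  else Delta.

Definition lind_limit (g : form) : Prop := exists k, lind_stage k g.

Lemma lind_stage_mono i j g : i <= j -> lind_stage i g -> lind_stage j g.
Proof.
elim: j => [|j IH]; first by rewrite leqn0 => /eqP ->.
rewrite leq_eqVlt => /orP [/eqP -> //|/IH Hij Hg] /=.
by case: excluded_middle_informative => ?; [left|]; apply: Hij.
Qed.

Lemma lind_stage_avoids k : avoids (lind_stage k).
Proof. by elim: k => //= k IH; case: excluded_middle_informative. Qed.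

Lemma derivable_lind_limit a : derivable n lind_limit a -> exists k, derivable n (lind_stage k) a.
Proof.
case=> gs [Hgs Ha]; suff [k Hk] : exists k, forall g, inl g gs -> lind_stage k g.
  by exists k, gs.
elim: gs Hgs {Ha} => [|g gs IH] Hgs; first by exists 0.
have [k1 Hk1] := IH (fun x Hx => Hgs x (or_intror Hx)).
have [k2 Hk2] := Hgs g (or_introl erefl).
exists (maxn k1 k2) => x [<-|/Hk1]; first by apply: lind_stage_mono Hk2; rewrite leq_maxr.
by apply: lind_stage_mono; rewrite leq_maxl.
Qed.

Lemma lind_limit_avoids : avoids lind_limit.
Proof. by move=> ts Hts /derivable_lind_limit [k]; apply: lind_stage_avoids. Qed.

Lemma lind_limit_rejected a : ~ lind_limit a ->
  exists ts, (forall t, inl t ts -> Theta t) /\ derivable n lind_limit (Imp a (bigOr ts)).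
Proof.
have [k <-] := enum_form_surj a => Ha.
have [ts Hts] : exists ts, ~ ((forall t, inl t ts -> Theta t) ->
    ~ derivable n (add_form (lind_stage k) (enum_form k)) (bigOr ts)).
  apply: not_all_ex_not => Hadd; apply: Ha; exists k.+1 => /=.
  by case: excluded_middle_informative => // ?; right.
have [HTheta /NNPP Hder] := imply_to_and _ _ Hts.
exists ts; split=> //; apply: derivable_mono (derivable_deduction Hder).
by move=> g Hg; exists k.
Qed.

Lemma lind_limit_prime : prime_theory n lind_limit.
Proof.
have limit_closed a : derivable n lind_limit a -> lind_limit a.
  move=> Ha; apply: NNPP => /lind_limit_rejected [ts [Hts Hder]].
  exact: (lind_limit_avoids Hts (derivable_mp Hder Ha)).
split=> // [Hbot|a b Hab].
  by apply: (lind_limit_avoids (ts := [::])) => //; apply: derivable_hyp.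
apply: NNPP => /not_or_and [/lind_limit_rejected [ts1 [Hts1 Ha]]].
move=> /lind_limit_rejected [ts2 [Hts2 Hb]].
apply: (lind_limit_avoids (ts := ts1 ++ ts2)); first by move=> t /inl_cat [/Hts1|/Hts2].
apply: (derivable_cut (gs := [:: Imp a (bigOr ts1); Imp b (bigOr ts2); Or a b])).
  by move=> g [<-|[<-|[<-|[]]]] //; apply: derivable_hyp.
apply: (prv_orE (a := a) (b := b)); last by apply: prv_hyp; right; right; left.
- apply: prv_deduction; apply: (prv_cut (c1 := [:: bigOr ts1])).
    by move=> _ [<-|[]]; apply: prv_mp prv_head; apply: prv_hyp; right; left.
  by apply: prv_bigOr_sub => t Ht; apply/inl_cat; left.
- apply: prv_deduction; apply: (prv_cut (c1 := [:: bigOr ts2])).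
    by move=> _ [<-|[]]; apply: prv_mp prv_head; apply: prv_hyp; right; right; left.
  by apply: prv_bigOr_sub => t Ht; apply/inl_cat; right.
Qed.

End Lindenbaum.

Theorem lindenbaum n (Delta Theta : form -> Prop) : avoids n Theta Delta ->
  exists T, [/\ prime_theory n T, th_sub Delta T & forall t, Theta t -> ~ T t].
Proof.
move=> HDelta; exists (lind_limit n Theta Delta); split.
- exact: lind_limit_prime.
- by move=> a Ha; exists 0.
- move=> t Ht HT; apply: (lind_limit_avoids HDelta (ts := [:: t])); first by move=> x [<-|[]].
  by apply: derivable_prv1 (derivable_hyp HT); apply/prv_orL/prv_head.
Qed.

Lemma prime_extension n (X : form -> Prop) b : ~ derivable n X b ->
  exists T, [/\ prime_theory n T, th_sub X T & ~ T b].
Proof.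
move=> Hb; have [|T [HT XT HTb]] := @lindenbaum n X (eq^~ b).
  move=> ts Hts Hder; apply: Hb; apply: derivable_prv1 Hder.
  elim: ts Hts => [|t ts IH] Hts /=; first exact/prv_botE/prv_head.
  apply: prv_orE prv_head; first by rewrite (Hts t (or_introl erefl)); apply: prv_refl.
  by apply: prv_imp; apply: IH => x Hx; apply: Hts; right.
by exists T; split=> //; apply: HTb.
Qed.

Lemma prime_extension_imp n (T : form -> Prop) a b : prime_theory n T -> ~ T (Imp a b) ->
  exists T', [/\ prime_theory n T', th_sub T T', T' a & ~ T' b].
Proof.
case=> Tclosed _ _ Hab; have [|T' [HT' HTT' HT'b]] := @prime_extension n (add_form T a) b.
  by move/derivable_deduction => /Tclosed.
by exists T'; split=> // [g Hg|]; apply: HTT'; [left|right].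
Qed.

Definition th_proper (A B : form -> Prop) : Prop := th_sub A B /\ exists g, B g /\ ~ A g.

Lemma th_proper_notsub (A B : form -> Prop) : th_sub A B -> ~ th_sub B A -> th_proper A B.
Proof.
move=> AB BA; split=> //; apply: NNPP => Hno; apply: BA => g Hg.
by apply: NNPP => Hg'; apply: Hno; exists g.
Qed.

Section Chains.
Variable n : nat.

Definition prime_chain (x : form -> Prop) (k : nat) : Prop :=
  exists c : nat -> form -> Prop, [/\ c 0 = x, forall i, i < k -> prime_theory n (c i) &
    forall i, i.+1 < k -> th_proper (c i) (c i.+1)].

Lemma prime_chain_head x y k :
  prime_theory n x -> th_sub x y -> prime_chain y k -> prime_chain x k.
Proof.
move=> Hx Hxy [c [Hc0 Hp Hs]]; exists (fun i => if i is j.+1 then c j.+1 else x).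
split=> // [[|i] Hi //|[|i] Hi]; [exact: Hp | | exact: Hs].
have [H1 [g [H2 H3]]] := Hs 0 Hi; rewrite Hc0 in H1 H3.
by split; [apply: th_sub_trans H1 | exists g; split=> // /Hxy].
Qed.

Lemma prime_chain_cons x y k :
  prime_theory n x -> th_proper x y -> prime_chain y k -> prime_chain x k.+1.
Proof.
move=> Hx Hxy [c [Hc0 Hp Hs]]; exists (fun i => if i is j.+1 then c j else x).
by split=> // [[|i] Hi|[|i] Hi] //; [exact: Hp | rewrite /= Hc0 | exact: Hs].
Qed.

(* [bd_n] forbids proper chains of n+1 prime theories: walking down such a chain, the
   disjunct [p_k] of [bd_k] is refuted by a witness of properness chosen at each step. *)
Lemma prime_chain_length x k : prime_chain x k -> k <= n.
Proof.
move=> [c [_ Hp Hs]]; rewrite leqNgt; apply/negP => Hk.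
have [q Hq] : exists q : nat -> form, forall k, 0 < k <= n ->
    c (n - k).+1 (q k) /\ ~ c (n - k) (q k).
  apply: (functional_choice (fun k g => 0 < k <= n -> c (n - k).+1 g /\ ~ c (n - k) g)).
  move=> i; case: (boolP (0 < i <= n)) => Hi; last by exists Bot.
  by have [_ [g Hg]] := Hs (n - i) ltac:(lia); exists g.
have Hbd i : i <= n -> ~ c (n - i) (bd q i).
  elim: i => [|i IH] Hi /=; first by rewrite subn0; case: (Hp n ltac:(lia)).
  have [Hqi Hqi'] := Hq i.+1 ltac:(lia).
  case: (Hp (n - i.+1) ltac:(lia)) => _ _ Hor /Hor [/Hqi' []|Himp].
  apply: (IH ltac:(lia)); have -> : n - i = (n - i.+1).+1 by lia.
  have [Hsub _] := Hs (n - i.+1) ltac:(lia).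
  exact: (prime_mp (Hp (n - i.+1).+1 ltac:(lia)) (Hsub _ Himp) Hqi).
apply: (Hbd n (leqnn n)); rewrite subnn; apply: prime_ML (axbd n q).
by apply: Hp; lia.
Qed.

End Chains.

Section KripkePutnam.
Variable n : nat.

Lemma prv_neg_or c d : provable n [:: Neg c; Neg d] (Neg (Or c d)).
Proof.
apply: prv_deduction; apply: (prv_orE (a := c) (b := d)) prv_head; first exact: prv_second.
by apply: prv_hyp; right; right; left.
Qed.

Lemma prv_neg_orl c d : provable n [:: Neg (Or c d)] (Neg c).
Proof. by apply: prv_deduction; apply: prv_mp prv_second _; apply/prv_orL/prv_head. Qed.

Lemma prv_neg_orr c d : provable n [:: Neg (Or c d)] (Neg d).
Proof. by apply: prv_deduction; apply: prv_mp prv_second _; apply/prv_orR/prv_head. Qed.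

Lemma neg_common_bigAnd (y z : form -> Prop) cs : prime_theory n y -> prime_theory n z ->
  (forall g, inl g cs -> exists c, [/\ g = Neg c, y (Neg c) & z (Neg c)]) ->
  exists chi, [/\ y (Neg chi), z (Neg chi) & provable n [:: Neg chi] (bigAnd cs)].
Proof.
move=> Hy Hz; elim: cs => [|g cs IH] Hcs /=.
  have top t : prime_theory n t -> t (Neg Bot).
    by move=> Ht; apply: (prime_prv Ht (gs := [::])) => //; apply: prv_refl.
  by exists Bot; split; [apply: top | apply: top | apply: prv_refl].
have [chi [Hychi Hzchi Hcs']] := IH (fun h Hh => Hcs h (or_intror Hh)).
have [c [-> Hyc Hzc]] := Hcs g (or_introl erefl).
exists (Or c chi); split; [exact: prime_prv2 (prv_neg_or c chi) Hyc Hychi |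
  exact: prime_prv2 (prv_neg_or c chi) Hzc Hzchi |].
apply: prv_andI; first exact: prv_neg_orl.
by apply: prv_cut Hcs' => _ [<-|[]]; apply: prv_neg_orr.
Qed.

Lemma prime_incompatible (w y : form -> Prop) : prime_theory n w ->
  (forall v, prime_theory n v -> th_sub w v -> ~ th_sub y v) ->
  exists ys, (forall g, inl g ys -> y g) /\ w (Neg (bigAnd ys)).
Proof.
case=> Tclosed _ _ Hwy.
have /derivable_split [ys [Hys Hder]] : derivable n (fun g => w g \/ y g) Bot.
  apply: NNPP => /prime_extension [v [Hv Hwyv Hvbot]].
  by apply: (Hwy v Hv) => g Hg; apply: Hwyv; [left|right].
by exists ys; split=> //; apply: Tclosed.
Qed.

Section KPmeet.
Variables x y z : form -> Prop.
Hypotheses (Hx : prime_theory n x) (Hy : prime_theory n y) (Hz : prime_theory n z).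
Hypotheses (Hxy : th_sub x y) (Hxz : th_sub x z).

Definition kp_base (g : form) : Prop :=
  x g \/ exists c, [/\ g = Neg c, y (Neg c) & z (Neg c)].

Lemma kp_base_avoids : avoids n (fun t => ~ y t \/ ~ z t) kp_base.
Proof.
move=> ts Hts Hder; have [ls [rs [Hls Hrs Hlrs]]] := inl_partition Hts.
have /derivable_split [cs [Hcs Hder']] := derivable_prv1 (prv_bigOr_split Hlrs) Hder.
have [chi [Hychi Hzchi Hchi]] := neg_common_bigAnd Hy Hz Hcs.
have Hxchi : x (Imp (Neg chi) (Or (bigOr ls) (bigOr rs))).
  case: Hx => Tclosed _ _; apply: Tclosed; apply: derivable_prv1 Hder'.
  apply: prv_deduction; apply: (prv_mp (a := bigAnd cs)); first exact: prv_second.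
  by apply: prv_cut Hchi => _ [<-|[]]; apply: prv_head.
have := prime_mp Hx (prime_ML Hx (axkp n chi (bigOr ls) (bigOr rs))) Hxchi.
case: (Hx) => _ _ Hor /Hor [] /= Himp.
- exact: (prime_bigOr Hy Hls (prime_mp Hy (Hxy Himp) Hychi)).
- exact: (prime_bigOr Hz Hrs (prime_mp Hz (Hxz Himp) Hzchi)).
Qed.

(* A prime extension [w] of [u] compatible with neither [y] nor [z] refutes some
   [bigAnd ys] of [y] and [bigAnd zs] of [z], whereas [u] contains the negation
   [Neg (Neg (Or (bigAnd ys) (bigAnd zs)))] common to [y] and [z]. *)
Lemma kp_meet : exists u, [/\ prime_theory n u, th_sub x u, th_sub u y, th_sub u z &
  forall w, prime_theory n w -> th_sub u w ->
    exists v, [/\ prime_theory n v, th_sub w v & th_sub y v \/ th_sub z v]].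
Proof.
have [u [Hu Hbase Hu_yz]] := lindenbaum kp_base_avoids.
exists u; split=> // [g Hg|g Hg|g Hg|w Hw Huw]; first by apply: Hbase; left.
- by apply: NNPP => Hn; apply: (Hu_yz g (or_introl Hn) Hg).
- by apply: NNPP => Hn; apply: (Hu_yz g (or_intror Hn) Hg).
apply: NNPP => Hno.
have [ys [Hys Hwys]] : exists ys, (forall g, inl g ys -> y g) /\ w (Neg (bigAnd ys)).
  by apply: prime_incompatible => // v Hv Hwv Hyv; apply: Hno; exists v; split=> //; left.
have [zs [Hzs Hwzs]] : exists zs, (forall g, inl g zs -> z g) /\ w (Neg (bigAnd zs)).
  by apply: prime_incompatible => // v Hv Hwv Hzv; apply: Hno; exists v; split=> //; right.
pose d := Or (bigAnd ys) (bigAnd zs).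
have notnot_d (t : form -> Prop) e :
    prime_theory n t -> provable n [:: e] d -> t e -> t (Neg (Neg d)).
  move=> Ht He te; apply: (prime_prv1 Ht _ te); apply: prv_deduction.
  by apply: (prv_mp prv_head); apply: prv_cut He => _ [<-|[]]; apply: prv_second.
have Hnnd : w (Neg (Neg d)).
  apply: Huw; apply: Hbase; right; exists (Neg d); split=> //.
  - by apply: notnot_d Hy (prv_orL _ prv_head) (prime_prv Hy Hys prv_bigAnd).
  - by apply: notnot_d Hz (prv_orR _ prv_head) (prime_prv Hz Hzs prv_bigAnd).
case: (Hw) => _ Hwbot _; apply: Hwbot; apply: (prime_mp Hw Hnnd).
exact: (prime_prv2 Hw (prv_neg_or _ _) Hwys Hwzs).
Qed.

End KPmeet.

End KripkePutnam.

Definition classicb (P : Prop) : bool := if excluded_middle_informative P then true else false.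

Lemma classicbP (P : Prop) : reflect P (classicb P).
Proof. by rewrite /classicb; case: excluded_middle_informative => H; constructor. Qed.

Lemma ord_max_ltnN n (i : 'I_n.+1) : ~~ (i < n) -> i = ord_max.
Proof. by move=> Hi; apply: val_inj => /=; have := ltn_ord i; lia. Qed.

Section Support.
Variable n : nat.
Variable ps : seq nat.
Hypothesis size_ps : size ps = n.
Hypothesis uniq_ps : uniq ps.

Definition lam_at (i : nat) : form := lam ps (nth 0 ps i).

Lemma prime_lam_at_inj z i j : prime_theory n z -> i < n -> j < n ->
  z (lam_at i) -> z (lam_at j) -> i = j.
Proof.
move=> Hz Hi Hj Hzi Hzj; apply/eqP; apply: contraT => Hij; exfalso.
case: (Hz) => _ Hbot _; apply: Hbot.
have Hpj : z (Var (nth 0 ps j)) by apply: (prime_prv1 Hz _ Hzj); apply/prv_andL/prv_head.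
apply: (prime_mp Hz _ Hpj); apply: (prime_prv1 Hz _ Hzi).
apply: (prv_cut (c1 := [:: bigAnd [seq Neg (Var y) | y <- ps & y != nth 0 ps i]])).
  by move=> _ [<-|[]]; apply/prv_andR/prv_head.
apply: prv_bigAnd_mem; apply: (inl_filter_map (fun y => Neg (Var y))).
  by rewrite mem_nth // size_ps.
by rewrite nth_uniq // ?size_ps // eq_sym.
Qed.

(* Index [n], i.e. [ord_max], marks the theories none of whose prime extensions contains any
   [lam_at j]. *)
Definition marked (i : nat) (y : form -> Prop) : Prop :=
  if i < n then y (lam_at i)
  else forall z, prime_theory n z -> th_sub y z -> forall j, j < n -> ~ z (lam_at j).

Lemma marked_up i y z : th_sub y z -> marked i y -> marked i z.
Proof.
rewrite /marked; case: ifP => _ Hyz Hy; first exact: Hyz.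
by move=> t Ht Hzt; apply: Hy => //; apply: th_sub_trans Hyz Hzt.
Qed.

Lemma marked_uniq z (i j : 'I_n.+1) : prime_theory n z -> marked i z -> marked j z -> i = j.
Proof.
rewrite /marked => Hz; case: ifP => Hi; case: ifP => Hj Hzi Hzj.
- exact/val_inj/(prime_lam_at_inj Hz Hi Hj Hzi Hzj).
- by case: (Hzj z Hz (fun g h => h) i Hi Hzi).
- by case: (Hzi z Hz (fun g h => h) j Hj Hzj).
- by rewrite (ord_max_ltnN (negbT Hj)) (ord_max_ltnN (negbT Hi)).
Qed.

Definition support (x : form -> Prop) : {set 'I_n.+1} :=
  [set i : 'I_n.+1 | classicb (exists y, [/\ prime_theory n y, th_sub x y & marked i y])].

Lemma in_support x (i : 'I_n.+1) :
  i \in support x <-> exists y, [/\ prime_theory n y, th_sub x y & marked i y].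
Proof. by rewrite inE; split=> /classicbP. Qed.

Lemma support_anti x x' : th_sub x x' -> support x' \subset support x.
Proof.
move=> Hx; apply/subsetP => i /in_support [y [Hy Hx'y Hyi]]; apply/in_support.
by exists y; split=> //; apply: th_sub_trans Hx'y.
Qed.

Lemma support_neq_proper x y : th_sub x y -> support x != support y -> th_proper x y.
Proof.
move=> Hxy Hneq; apply: th_proper_notsub => // Hyx; move/eqP: Hneq; apply.
by apply/eqP; rewrite eqEsubset !support_anti.
Qed.

Lemma support_neq0 x : prime_theory n x -> support x != set0.
Proof.
move=> Hx; apply/set0Pn.
case: (classic (exists j, j < n /\ exists y, [/\ prime_theory n y, th_sub x y & y (lam_at j)])).
  move=> [j [Hj [y Hy]]]; exists (Ordinal (ltn_trans Hj (ltnSn n))).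
  by apply/in_support; exists y; rewrite /marked /= Hj.
move=> Hno; exists ord_max; apply/in_support; exists x; rewrite /marked /= ltnn.
by split=> // z Hz Hxz j Hj Hzj; apply: Hno; exists j; split=> //; exists z.
Qed.

Lemma support_single x (i : 'I_n.+1) : i \in support x ->
  exists y, [/\ prime_theory n y, th_sub x y & support y = [set i]].
Proof.
move=> /in_support [y [Hy Hxy Hyi]]; exists y; split=> //; apply/setP => j; rewrite in_set1.
apply/idP/eqP => [/in_support [z [Hz Hyz Hzj]]|->]; last by apply/in_support; exists y; split.
exact: marked_uniq Hz Hzj (marked_up Hyz Hyi).
Qed.

Lemma support_kp_meet x y z : prime_theory n x -> prime_theory n y -> prime_theory n z ->
  th_sub x y -> th_sub x z ->
  exists u, [/\ prime_theory n u, th_sub x u, th_sub u y, th_sub u z &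
    support u = support y :|: support z].
Proof.
move=> Hx Hy Hz Hxy Hxz; have [u [Hu Hxu Huy Huz Hcompat]] := kp_meet Hx Hy Hz Hxy Hxz.
exists u; split=> //; apply/eqP; rewrite eqEsubset subUset.
apply/and3P; split; [|exact: support_anti|exact: support_anti].
apply/subsetP => i /in_support [w [Hw Huw Hwi]].
have [v [Hv Hwv [Hyv|Hzv]]] := Hcompat w Hw Huw; apply/setUP; [left|right];
  by apply/in_support; exists v; split=> //; apply: marked_up Hwi.
Qed.

Lemma support_realize k (S : {set 'I_n.+1}) x : #|S| = k.+1 -> prime_theory n x ->
  S \subset support x ->
  exists u, [/\ prime_theory n u, th_sub x u, support u = S & prime_chain n u k.+1].
Proof.
elim: k S => [|k IH] S HS Hx HSx.
  have [i Si] := cards1P (introT eqP HS); subst S.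
  have [y [Hy Hxy Hsy]] := support_single (subsetP HSx i (set11 i)).
  by exists y; split=> //; exists (fun=> y); split=> // [[]].
have [i Hi] : exists i, i \in S by apply/set0Pn; rewrite -card_gt0 HS.
have HS1 : #|S :\ i| = k.+1 by move: HS; rewrite (cardsD1 i S) Hi; case.
have [y [Hy Hxy Hsy Hchain]] := IH (S :\ i) HS1 Hx (subset_trans (subD1set S i) HSx).
have [z [Hz Hxz Hsz]] := support_single (subsetP HSx i Hi).
have [u [Hu Hxu Huy Huz Hsu]] := support_kp_meet Hx Hy Hz Hxy Hxz.
have HsuS : support u = S by rewrite Hsu Hsy Hsz setUC setD1K.
exists u; split=> //; apply: prime_chain_cons Hchain => //.
apply: support_neq_proper => //; rewrite HsuS Hsy; apply/eqP => /setP /(_ i).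
by rewrite !inE Hi eqxx.
Qed.

Lemma prime_chain_support x : prime_theory n x -> prime_chain n x #|support x|.
Proof.
move=> Hx; have := support_neq0 Hx; rewrite -card_gt0.
case E: #|support x| => [|k] // _.
have [u [Hu Hxu _ Hchain]] := support_realize E Hx (subxx _).
exact: prime_chain_head Hchain.
Qed.

End Support.

Arguments support_anti {n} ps {x x'}.
Arguments support_neq_proper n ps {x y}.

Section RootTheory.
Variable n : nat.
Variable ps : seq nat.
Hypothesis size_ps : size ps = n.
Hypothesis uniq_ps : uniq ps.
Variable T1 : form -> Prop.
Hypothesis primeT1 : prime_theory n T1.
Hypothesis T1_lam : forall i, i < n ->
  exists y, [/\ prime_theory n y, th_sub T1 y & y (lam_at ps i)].

Local Notation support := (support n ps).

Lemma support_T1 : support T1 = [set~ ord_max].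
Proof.
have T1_in (i : 'I_n.+1) : i < n -> i \in support T1.
  by move=> Hi; apply/in_support; rewrite /marked Hi; apply: T1_lam.
have max_notin : ord_max \notin support T1.
  apply/negP => Hmax; have := prime_chain_length (prime_chain_support size_ps uniq_ps primeT1).
  suff -> : support T1 = setT by rewrite cardsT card_ord ltnn.
  apply/setP => i; rewrite in_setT; case: (boolP (i < n)) => [/T1_in //|/ord_max_ltnN -> //].
apply/setP => i; rewrite in_setC1; case: (boolP (i < n)) => Hi.
  by rewrite T1_in // -(inj_eq val_inj) /= neq_ltn Hi.
by rewrite (ord_max_ltnN Hi) eqxx (negbTE max_notin).
Qed.

Lemma ord_max_notin_support x : th_sub T1 x -> ord_max \notin support x.
Proof.
by move=> HT1x; apply/negP => /(subsetP (support_anti ps HT1x)); rewrite support_T1 !inE eqxx.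
Qed.

Lemma prime_chain_to_T1 m x : prime_theory n x -> th_sub T1 x ->
  #|support T1 :\: support x| = m -> forall k, prime_chain n x k -> prime_chain n T1 (k + m).
Proof.
elim: m x => [|m IH] x Hx HT1x Hm k Hk; first by rewrite addn0; apply: prime_chain_head Hk.
have [j Hj] : exists j, j \in support T1 :\: support x by apply/set0Pn; rewrite -card_gt0 Hm.
have [z [Hz HT1z Hsz]] := support_single size_ps uniq_ps (subsetP (subsetDl _ _) j Hj).
have [u [Hu HT1u Hux Huz Hsu]] := support_kp_meet ps primeT1 Hx Hz HT1x HT1z.
have Hsu_j : support u = j |: support x by rewrite Hsu Hsz setUC.
have Hjx : j \notin support x by move: Hj; rewrite inE => /andP [].
have Hux_proper : th_proper u x.
  apply: (support_neq_proper n ps) => //; rewrite Hsu_j; apply: contraNneq Hjx => <-.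
  by rewrite setU11.
have Hm' : #|support T1 :\: support u| = m.
  have -> : support T1 :\: support u = (support T1 :\: support x) :\ j.
    by apply/setP => i; rewrite Hsu_j !inE; case: (i == j).
  by move: Hm; rewrite (cardsD1 j) Hj add1n => -[].
by rewrite -addSnnS; apply: (IH u Hu HT1u Hm' k.+1 (prime_chain_cons Hu Hux_proper Hk)).
Qed.

Lemma support_rigid x x' : prime_theory n x -> prime_theory n x' ->
  th_sub T1 x -> th_sub T1 x' -> support x' \subset support x -> th_sub x x'.
Proof.
move=> Hx Hx' HT1x HT1x' Hss.
have [u [Hu HT1u Hux Hux' Hsu]] := support_kp_meet ps primeT1 Hx Hx' HT1x HT1x'.
case: (classic (th_sub x u)) => [Hxu|Hxu]; first exact: th_sub_trans Hxu Hux'.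
have Hsu' : support u = support x by rewrite Hsu; apply/setUidPl.
have Hchain := prime_chain_cons Hu (th_proper_notsub Hux Hxu)
  (prime_chain_support size_ps uniq_ps Hx).
have Hsx : support x \subset support T1 := support_anti ps HT1x.
have := prime_chain_length (prime_chain_to_T1 Hu HT1u erefl Hchain).
have := subset_leq_card Hsx.
rewrite Hsu' cardsD (setIidPr Hsx) support_T1 cardsC1 card_ord; lia.
Qed.

Definition emb (w : {set 'I_n}) : {set 'I_n.+1} := lift ord_max @: w.

Lemma emb_setT : emb [set: 'I_n] = [set~ ord_max].
Proof.
apply/setP => j; rewrite !inE; apply/imsetP/idP => [[i _ ->]|]; first by rewrite eq_sym neq_lift.
by case: (unliftP ord_max j) => [i -> _|->]; [exists i | rewrite eqxx].
Qed.

Lemma emb_subset v w : (emb v \subset emb w) = (v \subset w).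
Proof.
apply/subsetP/subsetP => [Hvw i Hi|Hvw _ /imsetP [i Hi ->]]; last exact/imset_f/Hvw.
by have /imsetP [i' Hi' /lift_inj ->] := Hvw _ (imset_f _ Hi).
Qed.

Lemma support_emb x : th_sub T1 x -> exists w, support x = emb w.
Proof.
move=> HT1x; exists (lift ord_max @^-1: support x); apply/setP => j.
rewrite /emb; apply/idP/imsetP => [Hj|[i]]; last by rewrite inE => Hi ->.
case: (unliftP ord_max j) Hj => [i -> Hi|->]; first by exists i; rewrite // in_set.
by rewrite (negbTE (ord_max_notin_support HT1x)).
Qed.

Lemma theory_at w : w != set0 ->
  exists T, [/\ prime_theory n T, th_sub T1 T & support T = emb w].
Proof.
move=> Hw; have Hcard : #|emb w| = #|w|.-1.+1.
  by rewrite card_imset ?prednK ?card_gt0 //; apply: lift_inj.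
have Hsub : emb w \subset support T1 by rewrite support_T1 -emb_setT emb_subset subsetT.
by have [T [HT HT1T HsT _]] := support_realize size_ps uniq_ps Hcard primeT1 Hsub; exists T.
Qed.

(* By [support_rigid], [forced w] is the prime extension of [T1] with support [emb w]
   (lemma [forcedE]). *)
Definition forced (w : {set 'I_n}) (f : form) : Prop :=
  forall T, prime_theory n T -> th_sub T1 T -> support T \subset emb w -> T f.

Definition canonical_val (p : nat) (w : {set 'I_n}) : Prop := forced w (Var p).

Lemma canonical_val_persistent : persistent canonical_val.
Proof.
move=> p w v _ _ Hvw Hp T HT HT1T HsT; apply: Hp => //.
by apply: subset_trans HsT _; rewrite emb_subset.
Qed.

Lemma forcedE w T f : prime_theory n T -> th_sub T1 T -> support T = emb w ->
  forced w f <-> T f.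
Proof.
move=> HT HT1T HsT; split=> [|Hf T' HT' HT1T' HsT']; first by apply; rewrite ?HsT.
by apply: support_rigid Hf; rewrite // HsT.
Qed.

Lemma forced_imp w a b : w != set0 -> forced w (Imp a b) <->
  forall v, v != set0 -> v \subset w -> forced v a -> forced v b.
Proof.
move=> Hw; split=> [Hab v _ Hvw Ha T HT HT1T HsT|Hab].
  apply: (prime_mp HT (Hab T HT HT1T _) (Ha T HT HT1T HsT)).
  by apply: subset_trans HsT _; rewrite emb_subset.
have [T [HT HT1T HsT]] := theory_at Hw; apply/(forcedE _ HT HT1T HsT).
apply: NNPP => /(prime_extension_imp HT) [T' [HT' HTT' HT'a HT'b]].
have HT1T' := th_sub_trans HT1T HTT'; have [v Hv] := support_emb HT1T'.
have Hv0 : v != set0 by rewrite -(imset_eq0 (lift ord_max)) -/(emb v) -Hv support_neq0.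
have Hvw : v \subset w by rewrite -emb_subset -Hv -HsT support_anti.
by apply/HT'b/(forcedE _ HT' HT1T' Hv); apply: Hab; rewrite // (forcedE _ HT' HT1T' Hv).
Qed.

Lemma sat_forced f w : w != set0 -> sat canonical_val w f <-> forced w f.
Proof.
elim: f w => [p||a IHa b IHb|a IHa b IHb|a IHa b IHb] w Hw /=; first by [].
all: have [T [HT HT1T HsT]] := theory_at Hw.
all: rewrite ?(forced_imp _ _ Hw) ?(forcedE _ HT HT1T HsT).
- by case: HT.
- rewrite IHa // IHb // !(forcedE _ HT HT1T HsT); split=> [[Ha Hb]|Hab].
    by apply: (prime_prv2 HT (prv_andI prv_head prv_second)).
  by split; apply: (prime_prv1 HT _ Hab); [apply/prv_andL/prv_head|apply/prv_andR/prv_head].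
- rewrite IHa // IHb // !(forcedE _ HT HT1T HsT); split=> [[Ha|Hb]|].
  + exact: (prime_prv1 HT (prv_orL _ prv_head) Ha).
  + exact: (prime_prv1 HT (prv_orR _ prv_head) Hb).
  + by case: HT => _ _; apply.
- by split=> H v Hv Hvw; move: (H v Hv Hvw); rewrite IHa // IHb.
Qed.

Lemma sat_root : 0 < n -> forall f, sat canonical_val [set: 'I_n] f <-> T1 f.
Proof.
move=> n_gt0 f; have Hroot : [set: 'I_n] != set0 by rewrite -card_gt0 cardsT card_ord.
by rewrite sat_forced // (forcedE _ primeT1 (fun g h => h)) // emb_setT support_T1.
Qed.

End RootTheory.

Lemma vars_bigAnd x gs : (forall g, inl g gs -> x \notin vars g) -> x \notin vars (bigAnd gs).
Proof.
elim: gs => [|g gs IH] H //=; rewrite mem_cat negb_or H /=; last by left.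
by apply: IH => h Hh; apply: H; right.
Qed.

(* The rule [Ed_n] is exactly what makes [Gamma] avoid [alpha] together with all the
   [Neg (lam_at ps i)]. *)
Lemma ed_prime_theory n (Gamma : form -> Prop) alpha ps : size ps = n -> uniq ps ->
  (forall x, x \in ps -> x \notin vars alpha /\ (forall g, Gamma g -> x \notin vars g)) ->
  ~ derives n Gamma alpha ->
  exists T, [/\ prime_theory n T, th_sub Gamma T, ~ T alpha &
    forall i, i < n -> exists y, [/\ prime_theory n y, th_sub T y & y (lam_at ps i)]].
Proof.
move=> size_ps uniq_ps fresh Hnd.
pose Theta t := t = alpha \/ exists2 i, i < n & t = Neg (lam_at ps i).
have [|T [HT GammaT TTheta]] := @lindenbaum n Gamma Theta.
  move=> ts Hts [gs [Hgs Hder]]; apply: Hnd; exists gs; split=> //.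
  apply: (ed (ps := ps)) => // [x /fresh [Hxa HxG]|].
    by split=> //; apply: vars_bigAnd => g /Hgs /HxG.
  apply: prv_ML; apply: (prv_cut (c1 := [:: bigOr ts])) => [_ [<-|[]] //|].
  apply: (prv_bigOr_sub (ts' := alpha :: _)) => t /Hts [->|[i Hi ->]]; first by left.
  by right; apply: (inl_map (fun x => Neg (lam ps x))); rewrite mem_nth // size_ps.
exists T; split=> // [|i Hi]; first by apply: TTheta; left.
have [|y [Hy HTy Hyi _]] := prime_extension_imp (a := lam_at ps i) (b := Bot) HT.
  by apply: TTheta; right; exists i.
by exists y.
Qed.

Theorem mainTheorem7 (n : nat) (Gamma : form -> Prop) (alpha : form) :
  1 <= n ->
  (exists ps : seq nat, [/\ size ps = n, uniq ps &
     forall x, x \in ps ->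
       x \notin vars alpha /\ (forall g, Gamma g -> x \notin vars g)]) ->
  ~ derives n Gamma alpha -> ~ sem_cons n Gamma alpha.
Proof.
move=> n_gt0 [ps [size_ps uniq_ps fresh]] Hnd Hsem.
have [T1 [HT1 GammaT1 T1alpha T1_lam]] := ed_prime_theory size_ps uniq_ps fresh Hnd.
have root_T1 := sat_root size_ps uniq_ps HT1 T1_lam n_gt0.
apply/T1alpha/root_T1/Hsem; first exact: canonical_val_persistent.
by move=> g /GammaT1 /root_T1.
Qed.
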